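(* Let $(S_n,X_n)_{n\ge0}$ be an alternating non-homogeneous semi-Markov process with $S_0=1$, $X_0=0$ and Gamma semi-Markov kernels with shape functions $k_Y,k_Z$ taking values in $[1,\infty)$ and rate functions $\lambda_Y,\lambda_Z$ taking values in $(0,\infty)$, all measurable, such that $\lambda_Y(x)\le c$ and $\lambda_Z(x)\le c$ for all $x\ge0$ for some $c>0$. Then its renewal function satisfies $M(t)\le ct$ for all $t\ge 0$.
   Context: Let $(S_n,X_n)_{n\ge0}$ be random variables on a probability space with $S_n\in\{0,1\}$, $0=X_0\le X_1\le X_2\le\cdots$, $S_0=1$, and alternating states: $S_n=1$ for even $n$ and $S_n=0$ for odd $n$. Write $T_{n+1}=X_{n+1}-X_n$. The process is called an alternating non-homogeneous semi-Markov process with semi-Markov kernels $G_Y,G_Z$ if for every $n\ge 0$ the conditional distribution of $T_{n+1}$ given $(S_0,X_0),\dots,(S_n,X_n)$ depends only on $(S_n,X_n)$ (and not on $n$), with $\mathbb P(T_{n+1}\le \tau\mid S_n=1,X_n=x)=G_Y(x,\tau)$ and $\mathbb P(T_{n+1}\le\tau\mid S_n=0,X_n=x)=G_Z(x,\tau)$ for all $x,\tau\ge 0$; here for each $x\ge0$, $G_Y(x,\cdot)$ and $G_Z(x,\cdot)$ are distribution functions on $[0,\infty)$, jointly measurable in $(x,\tau)$, absolutely continuous with densities $g_Y(x,\cdot)$, $g_Z(x,\cdot)$. ''Gamma semi-Markov kernels with shape $k_T$ and rate $\lambda_T$'' means $g_T(x,\tau)=\lambda_T(x)^{k_T(x)}\tau^{k_T(x)-1}e^{-\lambda_T(x)\tau}/\Gamma(k_T(x))$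 for $\tau\ge 0$, $T\in\{Y,Z\}$. The cycle-counting process is $N(t)=\sup\{n\in\mathbb N_0: X_{2n}\le t\}$ and the renewal function is $M(t)=\mathbb E N(t)=\sum_{n=1}^\infty \mathbb P(X_{2n}\le t)$, $t\ge0$. *)

From HB Require Import structures.
From mathcomp Require Import all_boot all_order all_algebra.
From mathcomp Require Import all_classical all_reals all_analysis.
Set Implicit Arguments. Unset Strict Implicit. Unset Printing Implicit Defensive.
Import Order.TTheory GRing.Theory Num.Theory.
Local Open Scope classical_set_scope.
Local Open Scope ring_scope.

Section Defs.
Variable R : realType.

Definition GammaF (k : R) : R :=
  fine (\int[lebesgue_measure]_(t in `[0%R, +oo[%classic)
          (powR t (k - 1) * expR (- t))%:E)%E.

Definition gamma_density (k lam tau : R) : R :=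
  if (0 <= tau) then powR lam k * powR tau (k - 1) * expR (- (lam * tau)) / GammaF k
  else 0.

Definition gamma_kernel (k lam : R -> R) (x tau : R) : \bar R :=
  (\int[lebesgue_measure]_(s in `[0%R, tau]%classic)
      (gamma_density (k x) (lam x) s)%:E)%E.

Definition state (n : nat) : nat := if odd n then 0%N else 1%N.

End Defs.

Section Process.
Context {d : measure_display} {Omega : measurableType d} {R : realType}.

(* History sigma-algebra sigma((S_0,X_0),...,(S_n,X_n)) = sigma(X_0,...,X_n)
   (the S_i are deterministic). *)
Definition history (X : nat -> Omega -> R) (n : nat) : set (set Omega) :=
  <<s [set A | exists i : nat, (i <= n)%N /\
        exists B : set R, measurable B /\ A = X i @^-1` B] >>.

(* Alternating non-homogeneous semi-Markov process with kernels GY, GZ: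
   for every n, the conditional distribution function of
   T_{n+1} = X_{n+1} - X_n given the history up to n is
   G_{S_n}(X_n, .), i.e. for every history event A and tau >= 0,
   P(A /\ T_{n+1} <= tau) = E[1_A G_{S_n}(X_n, tau)]. *)
Definition alt_semi_markov (P : probability Omega R) (X : nat -> Omega -> R)
    (GY GZ : R -> R -> \bar R) : Prop :=
  (forall n, measurable_fun setT (X n)) /\
  (forall w, X 0%N w = 0) /\
  (forall n w, X n w <= X n.+1 w) /\
  (forall (n : nat) (A : set Omega) (tau : R), history X n A -> 0 <= tau ->
     P (A `&` [set w | X n.+1 w - X n w <= tau]) =
     (\int[P]_(w in A)
        (if state n == 1%N then GY (X n w) tau else GZ (X n w) tau))%E).

(* Renewal function M(t) = E N(t) = sum_{n >= 1} P(X_{2n} <= t). *)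
Definition renewal_function (P : probability Omega R) (X : nat -> Omega -> R)
    (t : R) : \bar R :=
  (\sum_(1 <= n <oo) P [set w | (X n.*2 w <= t)%R])%E.

End Process.

(* A Gamma law with shape k >= 1 and rate lam <= c is stochastically larger than
   the exponential law of rate c: its density is the exponential density of
   rate lam times the nondecreasing factor (lam s)^(k-1), so it puts relatively
   less mass near 0.  Hence, given the past, every inter-arrival time satisfies
   P(T_{n+1} <= tau) <= 1 - exp(-c tau).
   Cut [0, 3t/2[ into K cells of length h.  Once an arrival lies in a cell, each
   further step leaves that cell with conditional probability at least
   p = exp(-c h), so the expected number of arrivals below 3t/2 is at most
   K (1 - p) / p, which is <= 2ct for K > 6ct.  Only every other arrival ends a
   cycle, and P(X_{2n} <= t) <= P(X_{2n-1} <= t), whence M(t) <= ct. *)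

From HB Require Import structures.
From mathcomp Require Import all_boot all_order all_algebra.
From mathcomp Require Import all_classical all_reals all_analysis.
From mathcomp Require Import ring lra measurable_realfun.
Set Implicit Arguments. Unset Strict Implicit. Unset Printing Implicit Defensive.
Import Order.TTheory GRing.Theory Num.Theory.
Import numFieldTopology.Exports.
Local Open Scope classical_set_scope.
Local Open Scope ring_scope.

Section gamma_kernel_bound.
Context {R : realType}.
Notation mu := (@lebesgue_measure R).

Lemma cvg_powR (r x : R) : 0 < x -> powR u r @[u --> x] --> powR x r.
Proof.
move=> x0.
have -> : powR x r = expR (r * ln x) by rewrite /powR gt_eqF.
apply: cvg_trans.
  apply: (@near_eq_cvg _ _ _ _ (fun u => expR (r * ln u))).
  by near=> u; rewrite /powR gt_eqF //; near: u; exact: lt_nbhsr.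
have rln : (fun u => r * ln u) @ x --> r * ln x.
  by apply: cvgM; [exact: cvg_cst | exact: continuous_ln].
exact: (continuous_comp rln (@continuous_expR R _)).
Unshelve. all: end_near. Qed.

Lemma cvg_expRN (x : R) : expR (- u) @[u --> x] --> expR (- x).
Proof.
have oppx : (fun u : R => - u) @ x --> - x by apply: cvgN; exact: cvg_id.
exact: (continuous_comp oppx (@continuous_expR R _)).
Qed.

Definition euler_integrand (k u : R) := powR u (k - 1) * expR (- u).

Lemma euler_integrand_continuous (k : R) : 1 <= k ->
  {within `[0, +oo[, continuous (euler_integrand k)}.
Proof.
move=> k1; apply/continuous_within_itvcyP; split.
  move=> x; rewrite in_itv /= andbT => x0.
  by apply: cvgM; [exact: cvg_powR | exact: cvg_expRN].
have [->|k1'] := eqVneq k 1.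
  rewrite /euler_integrand subrr.
  under eq_fun do rewrite powRr0.
  rewrite powRr0; apply: cvg_at_right_filter.
  by apply: cvgM; [exact: cvg_cst | exact: cvg_expRN].
have kp : 0 < k - 1 by rewrite subr_gt0 lt_neqAle eq_sym k1' k1.
rewrite /euler_integrand powR0 ?gt_eqF // mul0r.
rewrite -[X in _ --> X](mul0r (expR (- 0))).
apply: cvgM; first exact: (powR_cvg0 kp).
by apply: cvg_at_right_filter; exact: cvg_expRN.
Qed.

Lemma derive1_mull (lam : R) : (fun s : R => lam * s)^`()%classic = cst lam.
Proof.
apply/funext => x.
by rewrite (@derive1Ml R id x lam) //= derive1_id mulr1.
Qed.

Definition gamma_weight (k lam s : R) :=
  powR lam k * powR s (k - 1) * expR (- (lam * s)).

Lemma gamma_weight_ge0 k lam s : 0 <= gamma_weight k lam s.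
Proof. by rewrite /gamma_weight !mulr_ge0 ?powR_ge0 ?expR_ge0. Qed.

Lemma measurable_gamma_weight k lam : measurable_fun setT (gamma_weight k lam).
Proof.
apply: measurable_funM; first exact: measurable_funM.
apply: measurableT_comp => //.
by apply: measurableT_comp => //; exact: measurable_funM.
Qed.

Lemma measurable_gamma_weightE k lam (D : set R) :
  measurable_fun D (fun s => (gamma_weight k lam s)%:E).
Proof.
by apply/measurable_EFinP; apply: measurable_funTS; exact: measurable_gamma_weight.
Qed.

Lemma gamma_weightE k lam s : 1 <= k -> 0 < lam -> 0 <= s ->
  gamma_weight k lam s = powR (lam * s) (k - 1) * exponential_pdf lam s.
Proof.
move=> k1 lam0 s0; rewrite exponential_pdfE // /gamma_weight powRM ?(ltW lam0) //.
rewrite mulNr -(mulr_powRB1 (ltW lam0) (lt_le_trans ltr01 k1)); ring.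
Qed.

Lemma euler_integral_rescale (k lam : R) : 1 <= k -> 0 < lam ->
  (\int[mu]_(u in `[0%R, +oo[) (euler_integrand k u)%:E =
   \int[mu]_(s in `[0%R, +oo[) (gamma_weight k lam s)%:E)%E.
Proof.
move=> k1 lam0.
have := @increasing_ge0_integration_by_substitutiony R (fun s => lam * s)
  (euler_integrand k) 0.
rewrite derive1_mull mulr0 => ->.
- apply: eq_integral => s; rewrite inE /= in_itv /= andbT => s0.
  rewrite /euler_integrand /gamma_weight /= !fctE; congr EFin.
  rewrite powRM ?(ltW lam0) // -(mulr_powRB1 (ltW lam0) (lt_le_trans ltr01 k1)).
  ring.
- by move=> x y _ _ xy; rewrite ltr_pM2l.
- by move=> x _; exact: cst_continuous.
- exact: is_cvg_cst.
- exact: is_cvg_cst.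
- split; first by move=> x _; exact: derivableM.
  by apply: cvg_at_right_filter; apply: cvgM; [exact: cvg_cst | exact: cvg_id].
- by apply: gt0_cvgMry => //; exact: cvg_id.
- exact: euler_integrand_continuous.
- move=> x; rewrite in_itv /= andbT => x0.
  by rewrite /euler_integrand mulr_ge0 ?powR_ge0 ?expR_ge0.
Qed.

Lemma exponential_tail lam tau : 0 < lam -> 0 <= tau ->
  (\int[mu]_(s in `[tau, +oo[) (exponential_pdf lam s)%:E = (expR (- lam * tau))%:E)%E.
Proof.
move=> lam0 tau0.
have expc : continuous (fun z : R => expR (- lam * z)).
  move=> z; apply: continuous_comp; last exact: continuous_expR.
  by apply: continuousM => //; exact: cst_continuous.
have -> : (\int[mu]_(s in `[tau, +oo[) (exponential_pdf lam s)%:E =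
            \int[mu]_(s in `[tau, +oo[) (lam * expR (- lam * s))%:E)%E.
  apply: eq_integral => s; rewrite inE /= in_itv /= andbT => ts.
  by rewrite exponential_pdfE // (le_trans tau0).
rewrite (@ge0_continuous_FTC2y R _ (fun x => - expR (- lam * x)) _ 0).
- by rewrite sub0e EFinN oppeK.
- by move=> x _; rewrite mulr_ge0 ?expR_ge0 ?(ltW lam0).
- apply: continuous_subspaceT => x.
  apply: (@continuousM _ R^o (fun=> lam) (fun x => expR (- lam * x))).
    exact: cst_continuous.
  exact: expc.
- rewrite -oppr0; apply: cvgN.
  rewrite (_ : (fun x => expR (- lam * x)) = (fun z => expR (- z)) \o (fun z => lam * z)).
    apply: (@cvg_comp _ _ _ _ _ _ (pinfty_nbhs R)); last exact: cvgr_expR.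
    by apply: gt0_cvgMry => //; exact: cvg_id.
  by apply: eq_fun => x; rewrite mulNr.
- by move=> x _; exact: ex_derive.
- by apply: cvgN; apply/cvg_at_right_filter; exact: expc.
- move=> z; rewrite in_itv /= andbT => z0.
  rewrite derive1_exponential_pdf ?exponential_pdfE //.
    by apply: ltW; apply: le_lt_trans z0.
  by rewrite in_itv /= andbT; apply: le_lt_trans z0.
Qed.

Lemma gamma_weight_head_le k lam tau : 1 <= k -> 0 < lam -> 0 < tau ->
  (\int[mu]_(s in `[0%R, tau]) (gamma_weight k lam s)%:E <=
   (powR (lam * tau) (k - 1) * (1 - expR (- lam * tau)))%:E)%E.
Proof.
move=> k1 lam0 tau0; set r := powR (lam * tau) (k - 1).
apply: (@le_trans _ _
  (\int[mu]_(s in `[0%R, tau]) (r%:E * (exponential_pdf lam s)%:E))%E).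
  apply: ge0_le_integral => //.
  - by move=> x _; rewrite lee_fin gamma_weight_ge0.
  - exact: measurable_gamma_weightE.
  - apply: measurable_funeM; apply/measurable_EFinP; apply: measurable_funTS.
    exact: measurable_exponential_pdf.
  - move=> x; rewrite /= in_itv /= => /andP[x0 xt].
    rewrite gamma_weightE // lee_fin ler_wpM2r ?exponential_pdf_ge0 ?(ltW lam0) // /r.
    apply: ge0_ler_powR; rewrite ?nnegrE ?mulr_ge0 ?(ltW lam0) ?(ltW tau0) ?subr_ge0 //.
    by rewrite ler_wpM2l // ltW.
rewrite ge0_integralZl_EFin ?/r ?powR_ge0 //.
- have := exponential_prob_itv0c lam tau0; rewrite /exponential_prob => ->.
  by rewrite EFinM EFinB.
- by move=> x _; rewrite lee_fin exponential_pdf_ge0 // ltW.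
- apply/measurable_EFinP; apply: measurable_funTS.
  exact: measurable_exponential_pdf.
Qed.

Lemma gamma_weight_tail_ge k lam tau : 1 <= k -> 0 < lam -> 0 < tau ->
  ((powR (lam * tau) (k - 1) * expR (- lam * tau))%:E <=
   \int[mu]_(s in `]tau, +oo[) (gamma_weight k lam s)%:E)%E.
Proof.
move=> k1 lam0 tau0; set r := powR (lam * tau) (k - 1).
rewrite integral_itv_obnd_cbnd; last exact: measurable_gamma_weightE.
rewrite EFinM -exponential_tail ?(ltW tau0) // -ge0_integralZl_EFin ?/r ?powR_ge0 //.
- apply: ge0_le_integral => //.
  + by move=> x _; rewrite lee_fin mulr_ge0 ?powR_ge0 ?exponential_pdf_ge0 ?ltW.
  + apply: measurable_funeM; apply/measurable_EFinP; apply: measurable_funTS.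
    exact: measurable_exponential_pdf.
  + exact: measurable_gamma_weightE.
  + move=> x; rewrite /= in_itv /= andbT => xt.
    have x0 : 0 <= x by apply: le_trans xt; exact: ltW.
    rewrite gamma_weightE // lee_fin ler_wpM2r ?exponential_pdf_ge0 ?(ltW lam0) // /r.
    apply: ge0_ler_powR; rewrite ?nnegrE ?mulr_ge0 ?(ltW lam0) ?(ltW tau0) ?subr_ge0 //.
    by rewrite ler_wpM2l // ltW.
- by move=> x _; rewrite lee_fin exponential_pdf_ge0 // ltW.
- apply/measurable_EFinP; apply: measurable_funTS.
  exact: measurable_exponential_pdf.
Qed.

Lemma set_itvcy_split (a b : R) : a <= b ->
  `[a, +oo[%classic = `[a, b]%classic `|` `]b, +oo[%classic.
Proof.
move=> ab; apply/seteqP; split => x /=; rewrite !in_itv /= ?andbT.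
  by move=> ax; case: (lerP x b) => xb; [left; apply/andP|right].
by case=> [/andP[]//|bx]; apply: le_trans (ltW bx).
Qed.

(* The factor (lam s)^(k-1) relating the Gamma to the exponential density
   is nondecreasing: it is at most r = (lam tau)^(k-1) on [0, tau] and at least
   r beyond, so with p = exp(-lam tau) the head mass is <= r (1 - p) and the
   tail mass is >= r p. *)
Lemma gamma_weight_head_ratio k lam tau : 1 <= k -> 0 < lam -> 0 < tau ->
  (\int[mu]_(s in `[0%R, tau]) (gamma_weight k lam s)%:E <=
   (1 - expR (- lam * tau))%:E *
   \int[mu]_(s in `[0%R, +oo[) (gamma_weight k lam s)%:E)%E.
Proof.
move=> k1 lam0 tau0.
rewrite (set_itvcy_split (ltW tau0)) ge0_integral_setU //; last first.
- apply/disj_setPS => x [] /=; rewrite !in_itv /= => /andP[_ xt] /andP[tx _].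
  by move: (le_lt_trans xt tx); rewrite ltxx.
- by move=> x _; rewrite lee_fin gamma_weight_ge0.
- exact: measurable_gamma_weightE.
have head := gamma_weight_head_le k1 lam0 tau0.
have tail := gamma_weight_tail_ge k1 lam0 tau0.
have head0 : (0 <= \int[mu]_(s in `[0%R, tau]) (gamma_weight k lam s)%:E)%E.
  by apply: integral_ge0 => x _; rewrite lee_fin gamma_weight_ge0.
have tail0 : (0 <= \int[mu]_(s in `]tau, +oo[) (gamma_weight k lam s)%:E)%E.
  by apply: integral_ge0 => x _; rewrite lee_fin gamma_weight_ge0.
set r := powR (lam * tau) (k - 1) in head tail.
set p := expR (- lam * tau) in head tail *.
have p0 : 0 < p by exact: expR_gt0.
have p1 : p < 1 by rewrite /p expR_lt1 mulNr oppr_lt0 mulr_gt0.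
have r0 : 0 <= r by exact: powR_ge0.
move: head0 head tail0 tail.
case: (\int[mu]_(s in `[0%R, tau]) _)%E => [a||] //.
case: (\int[mu]_(s in `]tau, +oo[) _)%E => [b||] // + + + +.
- rewrite -EFinD -EFinM !lee_fin; nra.
- by move=> *; rewrite addey // gt0_muley ?leey // lte_fin subr_gt0.
Qed.

Lemma euler_integral_ge0 k :
  (0 <= \int[mu]_(u in `[0%R, +oo[) (euler_integrand k u)%:E)%E.
Proof.
by apply: integral_ge0 => u _; rewrite lee_fin mulr_ge0 ?powR_ge0 ?expR_ge0.
Qed.

Lemma GammaF_ge0 (k : R) : 0 <= GammaF k.
Proof. exact: fine_ge0 (euler_integral_ge0 k). Qed.

(* [GammaF k] is [fine] of Euler's integral, so it is 0 when that integral
   is infinite; away from this junk value the two agree. *)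
Lemma gamma_weight_integral k lam : 1 <= k -> 0 < lam -> GammaF k != 0 ->
  (\int[mu]_(s in `[0%R, +oo[) (gamma_weight k lam s)%:E)%E = (GammaF k)%:E.
Proof.
move=> k1 lam0; rewrite -(euler_integral_rescale k1 lam0) /GammaF.
move: (euler_integral_ge0 k); rewrite /euler_integrand.
by case: (\int[mu]_(u in _) _)%E => [g||] //=; rewrite eqxx.
Qed.

Lemma gamma_kernel_ge0 (kf lf : R -> R) x tau : (0 <= gamma_kernel kf lf x tau)%E.
Proof.
apply: integral_ge0 => s _; rewrite lee_fin /gamma_density; case: ifP => // _.
by rewrite divr_ge0 ?GammaF_ge0 // !mulr_ge0 ?powR_ge0 ?expR_ge0.
Qed.

Lemma gamma_kernelE (kf lf : R -> R) x tau : gamma_kernel kf lf x tau =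
  (\int[mu]_(s in `[0%R, tau]) (gamma_weight (kf x) (lf x) s)%:E *
   (GammaF (kf x))^-1%:E)%E.
Proof.
rewrite -ge0_integralZr ?lee_fin ?invr_ge0 ?GammaF_ge0 //; last 2 first.
- exact: measurable_gamma_weightE.
- by move=> s _; rewrite lee_fin gamma_weight_ge0.
apply: eq_integral => s; rewrite inE /= in_itv /= => /andP[s0 _].
by rewrite /gamma_density s0 -EFinM.
Qed.

Lemma gamma_kernel_le_exponential (kf lf : R -> R) (c x tau : R) :
  1 <= kf x -> 0 < lf x -> lf x <= c -> 0 <= tau ->
  (gamma_kernel kf lf x tau <= (1 - expR (- (c * tau)))%:E)%E.
Proof.
move=> k1 lam0 lamc; rewrite le_eqVlt => /predU1P[<-|tau0].
  by rewrite /gamma_kernel set_itv1 integral_set1 mulr0 oppr0 expR0 subrr.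
have expc : 1 - expR (- lf x * tau) <= 1 - expR (- (c * tau)).
  by rewrite lerD2l lerN2 ler_expR mulNr lerN2 ler_wpM2r // ltW.
rewrite gamma_kernelE.
have [->|G0] := eqVneq (GammaF (kf x)) 0.
  rewrite invr0 mule0 lee_fin subr_ge0 expR_le1 oppr_le0 mulr_ge0 // ltW //.
  exact: lt_le_trans lamc.
have Gp : 0 < GammaF (kf x) by rewrite lt_neqAle eq_sym G0 GammaF_ge0.
have := gamma_weight_head_ratio k1 lam0 tau0.
rewrite gamma_weight_integral //.
have : (0 <= \int[mu]_(s in `[0%R, tau]) (gamma_weight (kf x) (lf x) s)%:E)%E.
  by apply: integral_ge0 => s _; rewrite lee_fin gamma_weight_ge0.
case: (\int[mu]_(s in _) _)%E => [j||] //= _.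
rewrite -!EFinM !lee_fin ler_pdivrMr // => /le_trans; apply.
by rewrite ler_wpM2r // ltW.
Qed.

End gamma_kernel_bound.

(* Unlike [ge0_le_integral], no measurability is needed: the integral of a
   nonnegative function is a supremum over the simple functions below it.  The
   kernel integrand [w |-> G (X n w) tau] is not known to be measurable. *)
Lemma ge0_le_integral_nonmeasurable d (T : measurableType d) (R : realType)
    (mu : {measure set T -> \bar R}) (D : set T) (f1 f2 : T -> \bar R) :
  (forall x, D x -> (0 <= f1 x)%E) -> (forall x, D x -> (f1 x <= f2 x)%E) ->
  (\int[mu]_(x in D) f1 x <= \int[mu]_(x in D) f2 x)%E.
Proof.
move=> f10 f12.
have f20 x : D x -> (0 <= f2 x)%E by move=> Dx; apply: le_trans (f10 _ Dx) (f12 _ Dx).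
have neg0 (f : T -> \bar R) : (forall x, D x -> (0 <= f x)%E) -> ((f \_ D)^\- = cst 0)%E.
  move=> f0; apply/funext => x; rewrite funenegE /patch /=.
  case: ifP => [/set_mem Dx|_]; last by rewrite oppe0 maxxx.
  by apply/max_idPr; rewrite leeNl oppe0 f0.
rewrite /integral /= (neg0 _ f10) (neg0 _ f20); apply: leeB => //.
apply: ereal_sup_le => _ [g gf1 <-]; exists g => //= x.
apply: le_trans (gf1 x) _.
rewrite !funeposE /patch /=; case: ifP => [/set_mem Dx|_] //.
by rewrite (max_idPl (f10 _ Dx)) (max_idPl (f20 _ Dx)) f12.
Qed.

Lemma geometric_cell_sum (F : fieldType) (p : F) r : p != 0 ->
  (1 - p ^+ r) + (1 - p) / p * \sum_(i < r) (1 - p ^+ i.+1) = (1 - p) / p * r%:R.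
Proof.
move=> p0; elim: r => [|r IH]; first by rewrite big_ord0 expr0 subrr mulr0 add0r.
rewrite big_ord_recr /= mulrDr addrA.
have -> : (1 - p) / p * \sum_(i < r) (1 - p ^+ i.+1) = (1 - p) / p * r%:R - (1 - p ^+ r).
  by rewrite -IH addrAC subrr add0r.
by rewrite exprS -addn1 natrD; field.
Qed.

Lemma sum_even_le_half (F : realFieldType) (f : nat -> F) N :
  (forall n, f n.*2.+2 <= f n.*2.+1) ->
  \sum_(n < N) f n.+1.*2 <= 2^-1 * \sum_(m < N.*2) f m.+1.
Proof.
move=> f_le; elim: N => [|N IH]; first by rewrite !big_ord0 mulr0.
rewrite big_ord_recr doubleS !big_ord_recr /= mulrDr mulrDr.
have := f_le N; rewrite -doubleS; lra.
Qed.

Section history_sigma_algebra.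
Context d (Omega : measurableType d) (R : realType) (X : nat -> Omega -> R).

Lemma historyI n A B : history X n A -> history X n B -> history X n (A `&` B).
Proof. exact: (@measurableI _ (g_sigma_algebraType _)). Qed.

Lemma historyT n : history X n setT.
Proof. exact: (@measurableT _ (g_sigma_algebraType _)). Qed.

Lemma history_preimage n (B : set R) : measurable B -> history X n (X n @^-1` B).
Proof. by move=> mB; apply: sub_gen_smallest; exists n; split => //; exists B. Qed.

Lemma historyS n A : history X n A -> history X n.+1 A.
Proof.
apply: sub_smallest2r; first exact: smallest_sigma_algebra.
by move=> _ [i [ni [B [mB ->]]]]; exists i; split => //; [exact: leqW | exists B].
Qed.

Lemma history_measurable n A : (forall m, measurable_fun setT (X m)) ->
  history X n A -> measurable A.
Proof.
move=> mX; apply: smallest_sub; first exact: sigma_algebra_measurable.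
by move=> _ [i [_ [B [mB ->]]]]; rewrite -[X i @^-1` B]setTI; apply: mX.
Qed.

End history_sigma_algebra.

Section probability_as_real.
Context d (Omega : measurableType d) (R : realType) (P : probability Omega R).

Definition pr (A : set Omega) : R := fine (P A).

Lemma prE A : measurable A -> P A = (pr A)%:E.
Proof. by move=> mA; rewrite /pr fineK // fin_num_measure. Qed.

Lemma pr_ge0 A : 0 <= pr A.
Proof. exact: fine_ge0. Qed.

Lemma pr_le A B : measurable A -> measurable B -> A `<=` B -> pr A <= pr B.
Proof.
by move=> mA mB AB; rewrite -lee_fin -!prE //; apply: le_measure; rewrite ?inE.
Qed.

Lemma prU A B : measurable A -> measurable B -> A `&` B = set0 ->
  pr (A `|` B) = pr A + pr B.
Proof.
move=> mA mB AB; apply/eqP; rewrite -eqe EFinD -!prE ?measureU //.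
exact: measurableU.
Qed.

Lemma pr0 : pr set0 = 0.
Proof. by rewrite /pr measure0. Qed.

Lemma prT : pr setT = 1.
Proof. by rewrite /pr probability_setT. Qed.

End probability_as_real.

Section arrivals_in_a_window.
Context d (Omega : measurableType d) (R : realType) (P : probability Omega R).
Variables (X : nat -> Omega -> R) (c h : R).
Hypothesis mX : forall n, measurable_fun setT (X n).
Hypothesis X_le : forall n w, X n w <= X n.+1 w.
Hypothesis c_gt0 : 0 < c.
Hypothesis h_gt0 : 0 < h.
Hypothesis step_le : forall n A tau, history X n A -> 0 <= tau ->
  pr P (A `&` [set w | X n.+1 w - X n w <= tau]) <= (1 - expR (- (c * tau))) * pr P A.

(* [p] bounds from below the conditional probability that a step leaves a cell
   of length [h]; [q] is the mean of the geometric number of further arrivals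
   in a cell that this dominates. *)
Let p := expR (- (c * h)).
Let q := (1 - p) / p.

Let p_gt0 : 0 < p. Proof. exact: expR_gt0. Qed.
Let p_le1 : p <= 1. Proof. by rewrite /p expR_le1 oppr_le0 mulr_ge0 // ltW. Qed.
Let q_ge0 : 0 <= q. Proof. by rewrite /q divr_ge0 ?subr_ge0 // ltW. Qed.

Lemma X_homo m n w : (m <= n)%N -> X m w <= X n w.
Proof.
elim: n => [|n IH]; first by rewrite leqn0 => /eqP ->.
rewrite leq_eqVlt => /orP[/eqP -> //|]; rewrite ltnS => mn.
exact: le_trans (IH mn) (X_le _ _).
Qed.

Lemma X_ltE n y : [set w | X n w < y] = X n @^-1` `]-oo, y[.
Proof. by apply/seteqP; split => w /=; rewrite in_itv. Qed.

Lemma X_geE n y : [set w | y <= X n w] = X n @^-1` `[y, +oo[.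
Proof. by apply/seteqP; split => w /=; rewrite in_itv /= andbT. Qed.

Lemma measurable_X_lt n y : measurable [set w | X n w < y].
Proof. by rewrite X_ltE -[X n @^-1` _]setTI; apply: mX. Qed.

Lemma measurable_step_le n tau : measurable [set w | X n.+1 w - X n w <= tau].
Proof.
rewrite (_ : [set w | _] = (fun w => X n.+1 w - X n w) @^-1` `]-oo, tau]).
  by rewrite -[_ @^-1` _]setTI; apply: measurable_funB.
by apply/seteqP; split => w /=; rewrite in_itv.
Qed.

Lemma history_X_lt n y : history X n [set w | X n w < y].
Proof. by rewrite X_ltE; apply: history_preimage. Qed.

Lemma history_X_ge n y : history X n [set w | y <= X n w].
Proof. by rewrite X_geE; apply: history_preimage. Qed.

Definition arrivals_below nn k A y :=
  \sum_(m < nn) pr P (A `&` [set w | X (k + m.+1)%N w < y]).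

Lemma arrivals_belowU nn k A1 A2 y : measurable A1 -> measurable A2 ->
  A1 `&` A2 = set0 ->
  arrivals_below nn k (A1 `|` A2) y = arrivals_below nn k A1 y + arrivals_below nn k A2 y.
Proof.
move=> mA1 mA2 A12; rewrite -big_split /=; apply: eq_bigr => i _.
rewrite setIUl prU //; try exact: measurableI (measurable_X_lt _ _).
by rewrite setIACA A12 set0I.
Qed.

Lemma arrivals_below_eq0 nn k A y : (forall w, A w -> y <= X k w) ->
  arrivals_below nn k A y = 0.
Proof.
move=> Ay; rewrite /arrivals_below big1 // => i _.
rewrite (_ : _ `&` _ = set0) ?pr0 //; apply/seteqP; split => // w [/Ay yX /=].
by rewrite ltNge (le_trans yX) // X_homo // leq_addr.
Qed.

Lemma step_le_cells k A L i : history X k A -> (forall w, A w -> L <= X k w) ->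
  pr P (A `&` [set w | X k.+1 w < L + i%:R * h]) <= (1 - p ^+ i) * pr P A.
Proof.
move=> hA AL.
have := step_le hA (mulr_ge0 (ler0n _ i) (ltW h_gt0)).
rewrite (_ : expR (- (c * (i%:R * h))) = p ^+ i); last first.
  by rewrite /p -expRM_natl; congr expR; ring.
apply: le_trans; apply: pr_le.
- exact: measurableI (history_measurable mX hA) (measurable_X_lt _ _).
- exact: measurableI (history_measurable mX hA) (measurable_step_le _ _).
- by move=> w [Aw /= lt]; split => //=; have := AL _ Aw; lra.
Qed.

Lemma pr_cell_split k A L i : history X k A ->
  pr P (A `&` [set w | X k w < L + i.+2%:R * h]) =
  pr P (A `&` [set w | X k w < L + h]) +
  pr P ((A `&` [set w | L + h <= X k w]) `&` [set w | X k w < (L + h) + i.+1%:R * h]).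
Proof.
move=> hA; have mA := history_measurable mX hA.
have mge : measurable [set w | L + h <= X k w].
  by rewrite X_geE -[X k @^-1` _]setTI; apply: mX.
have cellE : L + i.+2%:R * h = (L + h) + i.+1%:R * h.
  by rewrite -(addn1 i.+1) natrD; ring.
have cell1 : L + h <= L + i.+2%:R * h.
  by rewrite lerD2l -{1}(mul1r h) ler_wpM2r ?ler1n // ltW.
rewrite -prU; first last.
- apply/seteqP; split => // w [[_ /= lt] [[_ /= ge] _]].
  by move: (lt_le_trans lt ge); rewrite ltxx.
- by apply: measurableI (measurable_X_lt _ _); exact: measurableI.
- exact: measurableI (measurable_X_lt _ _).
congr pr; apply/seteqP; split => w /=; rewrite cellE.
  move=> [Aw lt]; case: (ltP (X k w) (L + h)) => [lt1|ge1]; [left|right] => //.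
case=> [[Aw /= lt]|[[Aw /= _] /= lt]]; split => //=.
by rewrite -cellE; exact: lt_le_trans cell1.
Qed.

Lemma arrivals_belowS nn k A y :
  arrivals_below nn.+1 k A y =
  pr P (A `&` [set w | X k.+1 w < y]) + arrivals_below nn k.+1 A y.
Proof.
rewrite /arrivals_below big_ord_recl /= addn1; congr (_ + _).
by apply: eq_bigr => i _; rewrite /bump /= add1n addSnnS.
Qed.

(* Split [A] according to whether [X k] lies in the first cell [[L, L + h[]:
   the hypothesis handles that part, and the rest starts at [L + h] with one
   cell less. *)
Lemma arrivals_below_cells nn k :
  (forall L r A, history X k A -> (forall w, A w -> L <= X k w) ->
     arrivals_below nn k A (L + r%:R * h) <= q * r%:R * pr P A) ->
  forall r L A, history X k A -> (forall w, A w -> L <= X k w) ->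
  arrivals_below nn k A (L + r%:R * h) <=
    q * \sum_(i < r) pr P (A `&` [set w | X k w < L + i.+1%:R * h]).
Proof.
move=> IH; elim=> [|r IHr] L A hA AL.
  by rewrite big_ord0 mulr0 mul0r addr0 arrivals_below_eq0.
set A1 := A `&` [set w | X k w < L + h].
set A2 := A `&` [set w | L + h <= X k w].
have hA1 : history X k A1 by apply: historyI hA _; exact: history_X_lt.
have hA2 : history X k A2 by apply: historyI hA _; exact: history_X_ge.
have A12 : A = A1 `|` A2.
  rewrite -setIUr (_ : _ `|` _ = setT) ?setIT //.
  by apply/seteqP; split => // w _ /=; case: (ltP (X k w) (L + h)); [left|right].
have A1A2 : A1 `&` A2 = set0.
  apply/seteqP; split => // w [[_ /= lt] [_ /= ge]].
  by move: (lt_le_trans lt ge); rewrite ltxx.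
have B1 : arrivals_below nn k A1 (L + r.+1%:R * h) <= q * r.+1%:R * pr P A1.
  by apply: IH => // w [/AL].
have B2 : arrivals_below nn k A2 (L + r.+1%:R * h) <=
    q * \sum_(i < r) pr P (A2 `&` [set w | X k w < (L + h) + i.+1%:R * h]).
  rewrite (_ : L + r.+1%:R * h = (L + h) + r%:R * h); last first.
    by rewrite -addn1 natrD; ring.
  by apply: IHr => // w [].
have mA1 := history_measurable mX hA1.
have mA2 := history_measurable mX hA2.
rewrite {1}A12 arrivals_belowU //.
rewrite big_ord_recl /= mul1r.
under eq_bigr => i _ do rewrite /bump /= (pr_cell_split _ _ hA).
rewrite big_split /= sumr_const card_ord -/A1 -/A2.
move: B1 B2; rewrite -mulr_natl -addn1 natrD; lra.
Qed.

(* The first step stays below [L + r h] with probability at most [1 - p^r];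
   [geometric_cell_sum] absorbs it into the bound on the later arrivals. *)
Lemma arrivals_below_le nn k L r A : history X k A ->
  (forall w, A w -> L <= X k w) ->
  arrivals_below nn k A (L + r%:R * h) <= q * r%:R * pr P A.
Proof.
elim: nn k L r A => [|nn IH] k L r A hA AL.
  by rewrite /arrivals_below big_ord0 mulr_ge0 ?pr_ge0 // mulr_ge0.
have AL' w : A w -> L <= X k.+1 w by move/AL/le_trans; apply; exact: X_le.
have first_step := step_le_cells r hA AL.
have later := arrivals_below_cells (IH k.+1) r (historyS hA) AL'.
have cells : q * \sum_(i < r) pr P (A `&` [set w | X k.+1 w < L + i.+1%:R * h]) <=
    q * (\sum_(i < r) (1 - p ^+ i.+1)) * pr P A.
  rewrite -mulrA big_distrl /=; apply: ler_wpM2l => //.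
  by apply: ler_sum => i _; exact: step_le_cells.
rewrite arrivals_belowS -(geometric_cell_sum r (lt0r_neq0 p_gt0)) mulrDl.
exact: lerD first_step (le_trans later cells).
Qed.

End arrivals_in_a_window.

Lemma grid_constant_le (R : realType) (c t : R) (K : nat) :
  0 < c -> 0 < t -> 6 * c * t < K%:R ->
  K%:R * ((1 - expR (- (c * (3 / 2 * t / K%:R)))) / expR (- (c * (3 / 2 * t / K%:R))))
    <= 2 * (c * t).
Proof.
move=> c0 t0 cK.
have K0 : 0 < K%:R :> R by apply: le_lt_trans cK; rewrite !mulr_ge0 // ltW.
set w := c * _; set p := expR (- w).
have wK : w * K%:R = 3 / 2 * (c * t) by rewrite /w mulrA divfK ?gt_eqF //; ring.
have w0 : 0 <= w by rewrite /w mulr_ge0 ?divr_ge0 ?mulr_ge0 // ltW.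
have w4 : w <= 1 / 4.
  by rewrite -(ler_pM2r K0) wK; lra.
have p0 : 0 < p by exact: expR_gt0.
have pw : 1 - w <= p by have := expR_ge1Dx (- w); rewrite /p; lra.
rewrite mulrA ler_pdivrMr // -/p.
have : K%:R * (1 - p) <= K%:R * w by rewrite ler_wpM2l ?(ltW K0) //; lra.
have : (1 - w) * (2 * (c * t)) <= p * (2 * (c * t)).
  by rewrite ler_wpM2r // mulr_ge0 ?mulr_ge0 ?ltW.
nra.
Qed.

Section renewal_bound.
Context d (Omega : measurableType d) (R : realType) (P : probability Omega R).
Variables (X : nat -> Omega -> R) (c : R).
Hypothesis mX : forall n, measurable_fun setT (X n).
Hypothesis X0 : forall w, X 0 w = 0.
Hypothesis X_le : forall n w, X n w <= X n.+1 w.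
Hypothesis c_gt0 : 0 < c.
Hypothesis step_le : forall n A tau, history X n A -> 0 <= tau ->
  pr P (A `&` [set w | X n.+1 w - X n w <= tau]) <= (1 - expR (- (c * tau))) * pr P A.

Lemma measurable_X_le m t : measurable [set w | X m w <= t].
Proof.
rewrite (_ : [set w | _] = X m @^-1` `]-oo, t]); last first.
  by apply/seteqP; split => w /=; rewrite in_itv.
by rewrite -[X m @^-1` _]setTI; apply: mX.
Qed.

Lemma sum_pr_X_lt_le t K M : 0 < t -> (0 < K)%N ->
  \sum_(m < M) pr P [set w | X m.+1 w < t] <=
  K%:R * ((1 - expR (- (c * (t / K%:R)))) / expR (- (c * (t / K%:R)))).
Proof.
move=> t0 K0; have h0 : 0 < t / K%:R by rewrite divr_gt0 // ltr0n.
have X0_ge w : setT w -> 0 <= X 0 w by rewrite X0.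
have := arrivals_below_le mX X_le c_gt0 h0 step_le M K (@historyT _ _ _ X 0) X0_ge.
rewrite add0r mulrC divfK ?pnatr_eq0 -?lt0n // prT mulr1 mulrC.
rewrite /arrivals_below; under eq_bigr => i _ do rewrite add0n setTI.
exact.
Qed.

Lemma pr_X_le0 m : (0 < m)%N -> pr P [set w | X m w <= 0] = 0.
Proof.
move=> m0; apply/le_anti; rewrite pr_ge0 andbT.
have := step_le (@historyT _ _ _ X 0) (lexx 0).
rewrite mulr0 oppr0 expR0 subrr mul0r; apply: le_trans; apply: pr_le.
- exact: measurable_X_le.
- exact: measurableI (measurable_step_le mX _ _).
move=> w /= Xm0; split => //=; rewrite X0 subr0.
exact: le_trans (X_homo X_le w m0) Xm0.
Qed.

Lemma partial_renewal_le t N : 0 <= t ->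
  \sum_(n < N) pr P [set w | X n.+1.*2 w <= t] <= c * t.
Proof.
rewrite le_eqVlt => /predU1P[<-|t0].
  by rewrite mulr0; apply: sumr_le0 => n _; rewrite pr_X_le0.
set K := (Num.truncn (6 * c * t)).+1.
have t'0 : 0 < 3 / 2 * t by rewrite mulr_gt0.
have halve : \sum_(n < N) pr P [set w | X n.+1.*2 w <= t] <=
    2^-1 * \sum_(m < N.*2) pr P [set w | X m.+1 w <= t].
  apply: (@sum_even_le_half _ (fun m => pr P [set w | X m w <= t])) => n.
  apply: pr_le; [exact: measurable_X_le | exact: measurable_X_le | move=> w /=].
  by apply: le_trans; exact: X_le.
have cells := sum_pr_X_lt_le N.*2 t'0 (ltn0Sn _ : (0 < K)%N).
have grid := grid_constant_le c_gt0 t0 (truncnS_gt (6 * c * t)).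
rewrite -/K in grid.
suff : \sum_(m < N.*2) pr P [set w | X m.+1 w <= t] <= 2 * (c * t) by lra.
apply: le_trans grid; apply: le_trans cells; apply: ler_sum => m _.
apply: pr_le; [exact: measurable_X_le | exact: measurable_X_lt | move=> w /= Xt].
by apply: le_lt_trans Xt _; lra.
Qed.

Lemma renewal_function_le t : 0 <= t -> (renewal_function P X t <= (c * t)%:E)%E.
Proof.
move=> t0; apply: lime_le.
  by apply: is_cvg_nneseries => n _ _; exact: measure_ge0.
apply: nearW => N /=.
rewrite (_ : (\sum_(1 <= n < N) P [set w | (X n.*2 w <= t)%R])%E =
             (\sum_(1 <= n < N) pr P [set w | X n.*2 w <= t])%:E); last first.
  by rewrite -sumEFin; apply: eq_bigr => n _; rewrite prE //; exact: measurable_X_le.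
by rewrite lee_fin big_add1 big_mkord; exact: partial_renewal_le.
Qed.

End renewal_bound.

Lemma alt_semi_markov_step_le d (Omega : measurableType d) (R : realType)
    (P : probability Omega R) (X : nat -> Omega -> R) (GY GZ : R -> R -> \bar R) (c : R) :
  alt_semi_markov P X GY GZ ->
  (forall x tau, (0 <= GY x tau)%E) -> (forall x tau, (0 <= GZ x tau)%E) ->
  (forall x tau, 0 <= x -> 0 <= tau -> (GY x tau <= (1 - expR (- (c * tau)))%:E)%E) ->
  (forall x tau, 0 <= x -> 0 <= tau -> (GZ x tau <= (1 - expR (- (c * tau)))%:E)%E) ->
  forall n A tau, history X n A -> 0 <= tau ->
  pr P (A `&` [set w | X n.+1 w - X n w <= tau]) <= (1 - expR (- (c * tau))) * pr P A.
Proof.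
move=> [mX [X0 [X_le kernel_eq]]] GY0 GZ0 GYc GZc n A tau hA tau0.
have X_ge0 m w : 0 <= X m w by rewrite -(X0 w) (X_homo X_le w (leq0n m)).
have mA := history_measurable mX hA.
rewrite -lee_fin EFinM -!prE ?kernel_eq //; last first.
  exact: measurableI (measurable_step_le mX _ _).
apply: (@le_trans _ _ (\int[P]_(w in A) (1 - expR (- (c * tau)))%:E)%E).
  apply: ge0_le_integral_nonmeasurable => w _.
    by case: ifP => _; [exact: GY0 | exact: GZ0].
  by case: ifP => _; [exact: GYc | exact: GZc].
by rewrite integral_cst.
Qed.

Theorem corollary1 (d : measure_display) (Omega : measurableType d)
    (R : realType) (P : probability Omega R) (X : nat -> Omega -> R)
    (kY kZ lamY lamZ : R -> R) (c : R) :
  measurable_fun setT kY -> measurable_fun setT kZ ->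
  measurable_fun setT lamY -> measurable_fun setT lamZ ->
  (forall x, 0 <= x -> 1 <= kY x) -> (forall x, 0 <= x -> 1 <= kZ x) ->
  (forall x, 0 <= x -> 0 < lamY x) -> (forall x, 0 <= x -> 0 < lamZ x) ->
  0 < c ->
  (forall x, 0 <= x -> lamY x <= c) -> (forall x, 0 <= x -> lamZ x <= c) ->
  alt_semi_markov P X (gamma_kernel kY lamY) (gamma_kernel kZ lamZ) ->
  forall t : R, 0 <= t -> (renewal_function P X t <= (c * t)%:E)%E.
Proof.
move=> _ _ _ _ kY1 kZ1 lamY0 lamZ0 c0 lamYc lamZc semi_markov t t0.
have [mX [X0 [X_le _]]] := semi_markov.
have step := alt_semi_markov_step_le semi_markov (@gamma_kernel_ge0 _ kY lamY)
  (@gamma_kernel_ge0 _ kZ lamZ)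
  (fun x tau x0 => gamma_kernel_le_exponential (kY1 _ x0) (lamY0 _ x0) (lamYc _ x0))
  (fun x tau x0 => gamma_kernel_le_exponential (kZ1 _ x0) (lamZ0 _ x0) (lamZc _ x0)).
exact (renewal_function_le mX X0 X_le c0 step t0).
Qed.
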